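(* Let $W_1,\dots,W_m\in\mathbb{R}^{n\times n}$ be signed adjacency matrices with $W_k\mathbf{1}=\mathbf{1}$ for all $k$. If for every $k\in\{1,\dots,m\}$ the matrix $W_k$ is eventually stochastic and normal, then $\mathbb{W}=\{W_1,\dots,W_m\}$ is a consensus set for the switched system $\mathbf{x}(t+1)=W_{\sigma(t)}\mathbf{x}(t)$.
   Context: $W_k$ are real matrices (entries of any sign). $W$ is eventually positive if there is $t_0\in\mathbb{Z}_{\ge0}$ with $W^t$ entrywise positive for all integers $t\ge t_0$; eventually stochastic means eventually positive and $W\mathbf{1}=\mathbf{1}$. $W$ is normal if $WW^\top=W^\top W$. A switching signal is any map $\sigma:\mathbb{Z}_{\ge0}\to\{1,\dots,m\}$. $\mathbb{W}$ is a consensus set if for every switching signal and every $\mathbf{x}(0)$ there is $\alpha\in\mathbb{R}$ with $\lim_{t\to\infty}\mathbf{x}(t)=\alpha\mathbf{1}$. *)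

From HB Require Import structures.
From mathcomp Require Import all_boot all_order all_algebra.
From mathcomp Require Import all_classical all_reals all_analysis.
Set Implicit Arguments. Unset Strict Implicit. Unset Printing Implicit Defensive.
Import Order.TTheory GRing.Theory Num.Theory.
Import numFieldNormedType.Exports.
Local Open Scope classical_set_scope.
Local Open Scope ring_scope.

Definition ones (R : pzRingType) (n : nat) : 'cV[R]_n := const_mx 1.

Definition eventually_positive (R : realType) (n : nat) (W : 'M[R]_n) : Prop :=
  exists t0 : nat, forall t : nat, (t0 <= t)%N -> forall i j, 0 < (W ^+ t) i j.

Definition eventually_stochastic (R : realType) (n : nat) (W : 'M[R]_n) : Prop :=
  eventually_positive W /\ W *m ones R n = ones R n.

Definition normal_mx (R : pzRingType) (n : nat) (W : 'M[R]_n) : Prop :=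
  W *m W^T = W^T *m W.

Fixpoint traj (R : pzRingType) (n m : nat) (Ws : 'I_m -> 'M[R]_n)
  (sigma : nat -> 'I_m) (x0 : 'cV[R]_n) (t : nat) : 'cV[R]_n :=
  match t with
  | O => x0
  | S t' => Ws (sigma t') *m traj Ws sigma x0 t'
  end.

Definition consensus_set (R : realType) (n m : nat) (Ws : 'I_m -> 'M[R]_n) : Prop :=
  forall (sigma : nat -> 'I_m) (x0 : 'cV[R]_n),
    exists alpha : R, forall i : 'I_n,
      (fun t : nat => traj Ws sigma x0 t i ord0 : R) @ \oo --> alpha.

From HB Require Import structures.
From mathcomp Require Import all_boot all_order all_algebra.
From mathcomp Require Import all_classical all_reals all_analysis.
From mathcomp Require Import ring lra.
Import Order.TTheory GRing.Theory Num.Theory.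
Import numFieldNormedType.Exports.
Set Implicit Arguments. Unset Strict Implicit. Unset Printing Implicit Defensive.
Local Open Scope ring_scope.

(* A normal matrix W with W 1 = 1 also satisfies W^T 1 = 1, since
   |W^T 1 - 1| = |W 1 - 1| by normality. Hence the average of the state is
   preserved and the deviation from consensus stays orthogonal to 1.  Some
   power P = W^N is entrywise positive and doubly stochastic; subtracting its
   least entry d from every entry and applying weighted Cauchy-Schwarz shows
   that P shrinks |x|^2 by (1 - n d)^2 < 1 on the orthogonal of 1.  For normal
   W, Cauchy-Schwarz and |W^T y| = |W y| give |W x|^4 <= |x|^2 |W^2 x|^2, and
   iterating with N = 2^t0 transfers the contraction of W^N to W itself.  The
   largest of the finitely many contraction factors then makes the deviation
   decay geometrically under every switching signal. *)

Section InnerProduct.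
Variables (R : comPzRingType) (n : nat).
Implicit Types (u v w : 'cV[R]_n) (A : 'M[R]_n).

Definition dot u v : R := (u^T *m v) 0 0.
Definition norm2 u : R := dot u u.

Lemma dotE u v : dot u v = \sum_i u i 0 * v i 0.
Proof. by rewrite /dot !mxE; apply: eq_bigr => i _; rewrite mxE. Qed.

Lemma dotC u v : dot u v = dot v u.
Proof. by rewrite !dotE; apply: eq_bigr => i _; rewrite mulrC. Qed.

Lemma dot_trmx_mull A u v : dot (A^T *m u) v = dot u (A *m v).
Proof. by rewrite /dot trmx_mul trmxK mulmxA. Qed.

Lemma dot_mull A u v : dot (A *m u) v = dot u (A^T *m v).
Proof. by rewrite -dot_trmx_mull trmxK. Qed.

Lemma dotBl u w v : dot (u - w) v = dot u v - dot w v.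
Proof. by rewrite !dotE -sumrB; apply: eq_bigr => i _; rewrite !mxE mulrBl. Qed.

Lemma dotBr u w v : dot v (u - w) = dot v u - dot v w.
Proof. by rewrite !dotE -sumrB; apply: eq_bigr => i _; rewrite !mxE mulrBr. Qed.

Lemma dotZl a u v : dot (a *: u) v = a * dot u v.
Proof. by rewrite !dotE mulr_sumr; apply: eq_bigr => i _; rewrite !mxE mulrA. Qed.

Lemma dotZr a u v : dot v (a *: u) = a * dot v u.
Proof. by rewrite !dotE mulr_sumr; apply: eq_bigr => i _; rewrite !mxE mulrCA. Qed.

Lemma norm2B u v : norm2 (u - v) = norm2 u - 2 * dot u v + norm2 v.
Proof. rewrite /norm2 dotBl !dotBr (dotC v u); ring. Qed.

Lemma norm20 : norm2 0 = 0.
Proof. by rewrite /norm2 /dot mulmx0 mxE. Qed.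

Lemma norm2Z a u : norm2 (a *: u) = a ^+ 2 * norm2 u.
Proof. by rewrite /norm2 dotZl dotZr mulrA expr2. Qed.

Lemma norm2_trmx_mul A u : normal_mx A -> norm2 (A^T *m u) = norm2 (A *m u).
Proof. by move=> nA; rewrite /norm2 dot_trmx_mull mulmxA nA -mulmxA -dot_mull. Qed.

End InnerProduct.

Section RealInnerProduct.
Variables (R : realFieldType) (n : nat).
Implicit Types (u v : 'cV[R]_n).

Lemma norm2_ge0 u : 0 <= norm2 u.
Proof. by rewrite /norm2 dotE; apply: sumr_ge0 => i _; rewrite -expr2 sqr_ge0. Qed.

Lemma sqr_entry_le_norm2 u i : u i 0 ^+ 2 <= norm2 u.
Proof.
rewrite /norm2 dotE (bigD1 i) //= expr2 lerDl.
by apply: sumr_ge0 => j _; rewrite -expr2 sqr_ge0.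
Qed.

Lemma norm2_eq0 u : (norm2 u == 0) = (u == 0).
Proof.
apply/idP/eqP => [|->]; last by rewrite norm20.
rewrite /norm2 dotE psumr_eq0 => [/allP u0|i _]; last by rewrite -expr2 sqr_ge0.
apply/matrixP => i j; rewrite (ord1 j) mxE.
by apply/eqP; rewrite -sqrf_eq0 expr2 (eqP (u0 i (mem_index_enum i))).
Qed.

Lemma cauchy_schwarz u v : dot u v ^+ 2 <= norm2 u * norm2 v.
Proof.
have [/eqP v0|v_neq0] := eqVneq (norm2 v) 0.
  rewrite norm2_eq0 in v0; rewrite (eqP v0) /dot mulmx0 mxE expr0n /=.
  by rewrite mulr_ge0 ?norm2_ge0.
have v_gt0 : 0 < norm2 v by rewrite lt_def v_neq0 norm2_ge0.
have := norm2_ge0 (norm2 v *: u - dot u v *: v).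
rewrite norm2B !norm2Z dotZl dotZr.
have -> : norm2 v ^+ 2 * norm2 u - 2 * (norm2 v * (dot u v * dot u v)) +
    dot u v ^+ 2 * norm2 v = norm2 v * (norm2 v * norm2 u - dot u v ^+ 2).
  by ring.
by rewrite pmulr_rge0 // subr_ge0 mulrC.
Qed.

End RealInnerProduct.

Lemma weighted_cauchy_schwarz (R : rcfType) n (b x : 'I_n -> R) :
  (forall j, 0 <= b j) ->
  (\sum_j b j * x j) ^+ 2 <= (\sum_j b j) * \sum_j b j * x j ^+ 2.
Proof.
move=> b_ge0.
have := cauchy_schwarz (\col_j Num.sqrt (b j)) (\col_j (Num.sqrt (b j) * x j)).
rewrite /norm2 !dotE.
under eq_bigr do rewrite !mxE mulrA -expr2 sqr_sqrtr //.
under [X in _ <= X * _]eq_bigr do rewrite !mxE -expr2 sqr_sqrtr //.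
by under [X in _ <= _ * X]eq_bigr do rewrite !mxE -expr2 exprMn sqr_sqrtr //.
Qed.

Lemma mulmx_onesE (R : pzRingType) n (A : 'M[R]_n) i :
  (A *m ones R n) i 0 = \sum_j A i j.
Proof. by rewrite mxE; apply: eq_bigr => j _; rewrite mxE mulr1. Qed.

Lemma norm2_doubly_stochastic_le (R : rcfType) n (P : 'M[R]_n) (d : R) :
  (forall i j, d <= P i j) -> P *m ones R n = ones R n ->
  P^T *m ones R n = ones R n ->
  forall x, dot (ones R n) x = 0 -> norm2 (P *m x) <= (1 - d *+ n) ^+ 2 * norm2 x.
Proof.
move=> d_le P1 PT1 x x_perp.
pose r := 1 - d *+ n.
have sum_row i : \sum_j (P i j - d) = r.
  by rewrite sumrB -mulmx_onesE P1 sumr_const card_ord mxE.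
have sum_col j : \sum_i (P i j - d) = r.
  have := mulmx_onesE P^T j; rewrite PT1 mxE; under eq_bigr do rewrite mxE.
  by rewrite sumrB sumr_const card_ord => <-.
have sum_x : \sum_j x j 0 = 0.
  by rewrite -[RHS]x_perp dotE; apply: eq_bigr => j _; rewrite mxE mul1r.
have Px i : (P *m x) i 0 = \sum_j (P i j - d) * x j 0.
  under eq_bigr do rewrite mulrBl.
  by rewrite sumrB -mulr_sumr sum_x mulr0 subr0 mxE.
rewrite [norm2 (P *m x)]dotE.
apply: (@le_trans _ _ (\sum_i r * \sum_j (P i j - d) * x j 0 ^+ 2)).
  apply: ler_sum => i _; rewrite -expr2 Px -(sum_row i).
  by apply: weighted_cauchy_schwarz => j; rewrite subr_ge0.
rewrite -mulr_sumr exchange_big /=.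
under eq_bigr do rewrite -mulr_suml sum_col.
by rewrite -mulr_sumr mulrA -expr2 [norm2 x]dotE; under eq_bigr do rewrite expr2.
Qed.

Lemma mulmx_ones_exp (R : pzRingType) n (W : 'M[R]_n) k :
  W *m ones R n = ones R n -> W ^+ k *m ones R n = ones R n.
Proof.
move=> W1; elim: k => [|k IHk]; first by rewrite expr0 mul1mx.
by rewrite exprS -mulmxE -mulmxA IHk W1.
Qed.

Lemma trmx_exp (R : comPzRingType) n (W : 'M[R]_n) k : (W ^+ k)^T = W^T ^+ k.
Proof.
elim: k => [|k IHk]; first by rewrite !expr0 trmx1.
by rewrite exprS exprSr -!mulmxE trmx_mul IHk.
Qed.

Lemma normal_mx_exp (R : comPzRingType) n (W : 'M[R]_n) k :
  normal_mx W -> normal_mx (W ^+ k).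
Proof.
rewrite /normal_mx trmx_exp !mulmxE => nW.
by apply/commr_sym/commrX/commr_sym/commrX.
Qed.

Lemma normal_trmx_ones (R : realFieldType) n (W : 'M[R]_n) :
  W *m ones R n = ones R n -> normal_mx W -> W^T *m ones R n = ones R n.
Proof.
move=> W1 nW; apply/eqP; rewrite -subr_eq0 -norm2_eq0 norm2B norm2_trmx_mul //.
by rewrite dot_trmx_mull W1 /norm2; apply/eqP; ring.
Qed.

Lemma bernoulli_ineq (R : realDomainType) (h : R) N :
  -1 <= h -> 1 + N%:R * h <= (1 + h) ^+ N.
Proof.
move=> h_ge; elim: N => [|N IHN]; first by rewrite mul0r addr0 expr0.
have h1_ge0 : 0 <= 1 + h by rewrite -lerBlDl sub0r.
rewrite exprSr; apply: le_trans (ler_wpM2r h1_ge0 IHN).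
have N_ge0 : 0 <= N%:R :> R by [].
rewrite -natr1; nra.
Qed.

Lemma le_of_exp_le (R : realFieldType) (a s c : R) N : (0 < N)%N ->
  0 <= a -> 0 <= s -> 0 <= c -> a ^+ N <= c * s ^+ N ->
  a <= (1 - (1 - c) / N%:R) * s.
Proof.
move=> N_gt0 a_ge0 s_ge0 c_ge0 aN_le; pose rho := 1 - (1 - c) / N%:R.
have Nr_gt0 : 0 < N%:R :> R by rewrite ltr0n.
have h_le1 : (1 - c) / N%:R <= 1.
  rewrite ler_pdivrMr // mul1r; apply: le_trans (_ : 1 <= _); last by rewrite ler1n.
  by rewrite lerBlDr lerDl.
have rho_ge0 : 0 <= rho by rewrite subr_ge0.
have c_le : c <= rho ^+ N.
  have h_ge : -1 <= - ((1 - c) / N%:R) by rewrite lerN2.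
  apply: le_trans (bernoulli_ineq N h_ge).
  by rewrite mulrN mulrCA divff ?mulr1 ?gt_eqF //; lra.
rewrite leNgt; apply/negP => lt_rho_a.
have := ltrXn2r N (mulr_ge0 rho_ge0 s_ge0) lt_rho_a; rewrite -lt0n N_gt0 /=.
apply/negP; rewrite -leNgt exprMn; apply: le_trans aN_le _.
by apply: ler_wpM2r; rewrite ?exprn_ge0.
Qed.

Lemma norm2_mulmx_sqr_le (R : realFieldType) n (A : 'M[R]_n) x : normal_mx A ->
  norm2 (A *m x) ^+ 2 <= norm2 x * norm2 (A ^+ 2 *m x).
Proof.
move=> nA; rewrite {1}/norm2 dot_mull; apply: le_trans (cauchy_schwarz _ _) _.
by rewrite norm2_trmx_mul // mulmxA -[A *m A]/(A ^+ 2).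
Qed.

Lemma norm2_mulmx_exp2_le (R : realFieldType) n (A : 'M[R]_n) x k : normal_mx A ->
  norm2 (A *m x) ^+ (2 ^ k) * norm2 x <= norm2 x ^+ (2 ^ k) * norm2 (A ^+ (2 ^ k) *m x).
Proof.
move=> nA; set s := norm2 x; pose a k := norm2 (A ^+ (2 ^ k) *m x).
have [s0|s_neq0] := eqVneq s 0.
  by rewrite s0 mulr0 mulr_ge0 ?exprn_ge0 ?norm2_ge0.
have s_gt0 : 0 < s by rewrite lt_def s_neq0 norm2_ge0.
elim: k => [|k IHk]; first by rewrite expn0 !expr1 mulrC.
rewrite -/(a k.+1) expnS mulnC !exprM.
set u := norm2 (A *m x) ^+ (2 ^ k) in IHk *; set v := s ^+ (2 ^ k) in IHk *.
have step : a k ^+ 2 <= s * a k.+1.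
  rewrite /a expnS mulnC exprM; apply: norm2_mulmx_sqr_le.
  exact: normal_mx_exp.
rewrite -(ler_pM2l s_gt0).
apply: (@le_trans _ _ ((v * a k) ^+ 2)).
  have -> : s * (u ^+ 2 * s) = (u * s) ^+ 2 by ring.
  by rewrite ler_pXn2r ?nnegrE ?mulr_ge0 ?exprn_ge0 ?norm2_ge0.
rewrite exprMn [X in _ <= X](_ : _ = v ^+ 2 * (s * a k.+1)); last by ring.
by rewrite ler_wpM2l ?exprn_ge0 // ltW.
Qed.

Lemma eventually_stochastic_normal_contraction (R : realType) n (W : 'M[R]_n.+1) :
  eventually_stochastic W -> normal_mx W ->
  exists2 rho, rho < 1 &
    forall x, dot (ones R n.+1) x = 0 -> norm2 (W *m x) <= rho * norm2 x.
Proof.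
move=> [[t0 W_pos] W1] nW; pose N := (2 ^ t0)%N; pose P := W ^+ N.
have N_gt0 : (0 < N)%N by rewrite expn_gt0.
have P1 : P *m ones R n.+1 = ones R n.+1 by apply: mulmx_ones_exp.
have PT1 : P^T *m ones R n.+1 = ones R n.+1.
  by rewrite trmx_exp; apply/mulmx_ones_exp/normal_trmx_ones.
have P_pos i j : 0 < P i j by apply: W_pos; apply/ltnW/ltn_expl.
pose d := \big[Num.min/1]_(p : 'I_n.+1 * 'I_n.+1) P p.1 p.2.
have d_gt0 : 0 < d by apply/bigmin_gtP; split=> // p _; apply: P_pos.
have d_le i j : d <= P i j by apply: (bigmin_le _ (i, j)).
have dn_le1 : d *+ n.+1 <= 1.
  have := mulmx_onesE P ord0; rewrite P1 mxE => ->.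
  by rewrite -[X in d *+ X]card_ord -sumr_const; apply: ler_sum => j _.
pose c := (1 - d *+ n.+1) ^+ 2.
have c_ge0 : 0 <= c by apply: sqr_ge0.
have c_lt1 : c < 1.
  by rewrite expr_lt1 ?subr_ge0 // ltrBlDr ltrDl mulrn_wgt0.
exists (1 - (1 - c) / N%:R).
  by rewrite ltrBlDr ltrDl divr_gt0 ?subr_gt0 ?ltr0n.
move=> x x_perp; have [->|x_neq0] := eqVneq x 0.
  by rewrite mulmx0 norm20 mulr0.
have s_gt0 : 0 < norm2 x by rewrite lt_def norm2_eq0 x_neq0 norm2_ge0.
apply: le_of_exp_le; rewrite ?norm2_ge0 //.
rewrite -(ler_pM2r s_gt0) (le_trans (norm2_mulmx_exp2_le x t0 nW)) //.
rewrite -/N -/P (mulrC c) -mulrA ler_wpM2l ?exprn_ge0 ?norm2_ge0 //.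
exact: norm2_doubly_stochastic_le.
Qed.

Lemma cvg_sqr_dist_geometric (R : realType) (u : nat -> R) (a C rho : R) :
  0 <= rho -> rho < 1 -> (forall t, (u t - a) ^+ 2 <= C * rho ^+ t) ->
  (u @ \oo --> a)%classic.
Proof.
move=> rho_ge0 rho_lt1 u_le.
have C_ge0 : 0 <= C.
  by apply: le_trans (sqr_ge0 (u 0%N - a)) _; rewrite -[C]mulr1 -(expr0 rho).
pose q := Num.sqrt rho.
have q_lt1 : `|q| < 1 by rewrite ger0_norm ?sqrtr_ge0 // -sqrtr1 ltr_sqrt.
have dist_le t : `|u t - a| <= geometric (Num.sqrt C) q t.
  rewrite /= -sqrtr_sqr.
  have -> : Num.sqrt C * q ^+ t = Num.sqrt (C * rho ^+ t).
    rewrite sqrtrM // -(sqr_sqrtr rho_ge0) -exprM mulnC exprM sqrtr_sqr.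
    by rewrite ger0_norm ?exprn_ge0 ?sqrtr_ge0.
  exact: ler_wsqrtr.
have G := cvg_geometric (Num.sqrt C) q_lt1.
apply: (@squeeze_cvgr _ _ _ _ (fun t => a - geometric (Num.sqrt C) q t)
  (fun t => a + geometric (Num.sqrt C) q t)).
- by apply: nearW => t /=; rewrite -ler_distl.
- by rewrite -[X in (_ --> X)%classic]subr0; apply: cvgB => //; apply: cvg_cst.
- by rewrite -[X in (_ --> X)%classic]addr0; apply: cvgD => //; apply: cvg_cst.
Qed.

Lemma consensus_of_uniform_contraction (R : realType) n m
    (Ws : 'I_m -> 'M[R]_n.+1) (rho : R) :
  0 <= rho -> rho < 1 ->
  (forall k, Ws k *m ones R n.+1 = ones R n.+1) ->
  (forall k, (Ws k)^T *m ones R n.+1 = ones R n.+1) ->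
  (forall k x, dot (ones R n.+1) x = 0 -> norm2 (Ws k *m x) <= rho * norm2 x) ->
  consensus_set Ws.
Proof.
move=> rho_ge0 rho_lt1 W1 WT1 W_contr sigma x0.
pose alpha := dot (ones R n.+1) x0 / n.+1%:R.
pose e t := traj Ws sigma x0 t - alpha *: ones R n.+1.
have eS t : e t.+1 = Ws (sigma t) *m e t by rewrite /e /= mulmxBr -scalemxAr W1.
have e0_perp : dot (ones R n.+1) (e 0%N) = 0.
  have dot_ones : dot (ones R n.+1) (ones R n.+1) = n.+1%:R.
    rewrite dotE (eq_bigr (fun=> 1)) ?sumr_const ?card_ord // => i _.
    by rewrite mxE mulr1.
  by rewrite dotBr dotZr dot_ones divfK ?subrr ?pnatr_eq0.
have e_perp t : dot (ones R n.+1) (e t) = 0.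
  by elim: t => [|t IHt] //; rewrite eS -dot_trmx_mull WT1.
have e_le t : norm2 (e t) <= rho ^+ t * norm2 (e 0%N).
  elim: t => [|t IHt]; first by rewrite expr0 mul1r.
  rewrite eS exprS -mulrA; apply: le_trans (W_contr _ _ (e_perp t)) _.
  exact: ler_wpM2l.
exists alpha => i.
apply: (cvg_sqr_dist_geometric (C := norm2 (e 0%N))) rho_ge0 rho_lt1 _ => t. rewrite mulrC; apply: le_trans (e_le t).
by apply: le_trans (sqr_entry_le_norm2 _ i); rewrite !mxE mulr1.
Qed.

Theorem theorem8 (R : realType) (n m : nat) (Ws : 'I_m -> 'M[R]_n) :
  (forall k, Ws k *m ones R n = ones R n) ->
  (forall k, eventually_stochastic (Ws k) /\ normal_mx (Ws k)) ->
  consensus_set Ws.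
Proof.
case: n Ws => [|n] Ws W1 W_hyp; first by move=> sigma x0; exists 0 => -[].
have WT1 k : (Ws k)^T *m ones R n.+1 = ones R n.+1.
  exact: normal_trmx_ones (W1 k) (W_hyp k).2.
have [rho_ rho_lt1 W_contr] := fin_all_exists2 (fun k =>
  eventually_stochastic_normal_contraction (W_hyp k).1 (W_hyp k).2).
pose rho := \big[Num.max/0]_k rho_ k.
apply: (@consensus_of_uniform_contraction _ _ _ _ rho) => //.
- exact: bigmax_ge_id.
- by apply/bigmax_ltP.
- move=> k x x_perp; apply: le_trans (W_contr k x x_perp) _.
  by rewrite ler_wpM2r ?norm2_ge0 ?le_bigmax.
Qed.
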